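(* For every integer $n\ge 10$ and every integer $m$ with $3n-11\le m\le \left\lfloor \frac{n-1}{2} \right\rfloor \left\lceil \frac{n-1}{2} \right\rceil +2$, there exists a non-bipartite $K_4^-$-saturated graph with $n$ vertices and $m$ edges.
   Context: All graphs are finite and simple. $K_4^-$ denotes the graph obtained from the complete graph $K_4$ by deleting one edge. For a graph $H$, a graph $G$ is $H$-saturated if $G$ contains no copy of $H$ as a subgraph, but for every pair of nonadjacent vertices $u,v$ of $G$, the graph $G+uv$ contains at least one copy of $H$. This is part (b) of the theorem. *)

From mathcomp Require Import all_boot.
Set Implicit Arguments. Unset Strict Implicit. Unset Printing Implicit Defensive.

Definition simple_graph (T : finType) (e : rel T) : Prop :=
  irreflexive e /\ symmetric e.

(* number of edges: unordered pairs, counted as ordered pairs (x,y) with x<y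
   in the enumeration order given by enum_rank *)
Definition num_edges (T : finType) (e : rel T) : nat :=
  #|[set p : T * T | (enum_rank p.1 < enum_rank p.2) && e p.1 p.2]|.

(* K4^- = K4 minus the edge cd, on vertices a,b,c,d: edges ab ac ad bc bd.
   A (not necessarily induced) subgraph copy: four distinct vertices
   carrying these five edges. *)
Definition has_K4minus (T : finType) (e : rel T) : Prop :=
  exists a b c d : T,
    [/\ uniq [:: a; b; c; d],
        e a b, e a c, e a d & (e b c && e b d)].

Definition add_edge (T : finType) (e : rel T) (u v : T) : rel T :=
  fun x y => e x y || ((x == u) && (y == v)) || ((x == v) && (y == u)).

Definition K4minus_saturated (T : finType) (e : rel T) : Prop :=
  ~ has_K4minus e /\
  forall u v : T, u != v -> ~~ e u v -> has_K4minus (add_edge e u v).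

Definition bipartite (T : finType) (e : rel T) : Prop :=
  exists f : T -> bool, forall x y, e x y -> f x != f y.

From mathcomp Require Import all_boot zify.
Set Implicit Arguments. Unset Strict Implicit. Unset Printing Implicit Defensive.

(* The graphs are built from consecutive blocks A, C1, C2, Q of sizes a, c1,
   c2, k, with a distinguished vertex x0 in A and P the first k vertices of C1:
   the edges are A-C1, (A - x0)-C2, C2-Q, x0-Q and a perfect matching between
   P and Q.  Deleting x0 leaves a bipartite graph (sides C1 u C2 and the rest),
   and the neighbours of x0 only span the matching, so the triangles are the
   x0 p q with p q matched.  No edge lies in two of them, hence there is no
   K4^-, while any triangle rules out bipartiteness.  Adding a non-edge uv
   either gives u and v two common neighbours or closes a second triangle on
   an edge of a triangle; both create a K4^-.
   The graph has a c1 + (a - 1) c2 + k c2 + 2k edges.  With k = 2 and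
   c1 + c2 = n - a - 2 this sweeps the interval [a(n-a-2) + 4, a(n-a-2) + n - a];
   these intervals overlap for 3 <= a <= (n-1)/2 and cover [3n - 11, max]
   except, for odd n, the maximum itself, which k = 1, c2 = 0 attains. *)

Lemma triangle_not_bipartite (T : finType) (e : rel T) x y z :
  e x y -> e y z -> e x z -> ~ bipartite e.
Proof.
move=> exy eyz exz [f f_prop].
move: (f_prop _ _ exy) (f_prop _ _ eyz) (f_prop _ _ exz).
by case: (f x); case: (f y); case: (f z).
Qed.

Lemma unique_common_nbr_K4minus_free (T : finType) (e : rel T) :
  (forall x y z w, e x y -> e x z -> e y z -> e x w -> e y w -> z = w) ->
  ~ has_K4minus e.
Proof.
move=> uniq_nbr [x [y [z [w [uq exy exz exw /andP[eyz eyw]]]]]].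
by move: uq; rewrite (uniq_nbr x y z w) //= mem_seq1 eqxx !andbF.
Qed.

Lemma add_edgeC (T : finType) (e : rel T) u v : add_edge e u v =2 add_edge e v u.
Proof. by move=> x y; rewrite /add_edge -orbA (orbC (_ && _)) orbA. Qed.

Lemma eq_has_K4minus (T : finType) (e e' : rel T) :
  e =2 e' -> has_K4minus e -> has_K4minus e'.
Proof.
move=> ee' [x [y [z [w [uq exy exz exw eyzw]]]]].
by exists x, y, z, w; rewrite -!ee'.
Qed.

Section OrdinalGraph.
Variables (N : nat) (g : rel nat).

Definition ord_graph : rel 'I_N := fun x y => g x y.

Lemma num_edges_ord_graph :
  num_edges ord_graph = \sum_(x < N) \sum_(y < N) ((x < y) && g x y).
Proof.
rewrite /num_edges pair_bigA /= -sum1_card big_mkcond /=.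
by apply: eq_bigr => -[x y] _; rewrite inE !enum_rank_ord.
Qed.

Lemma add_edge_common_nbrs_K4minus (u v : 'I_N) z w :
  z < N -> w < N -> uniq [:: u : nat; v : nat; z; w] ->
  g u z -> g u w -> g v z -> g v w -> has_K4minus (add_edge ord_graph u v).
Proof.
move=> zN wN uq guz guw gvz gvw.
exists u, v, (Ordinal zN), (Ordinal wN); rewrite /add_edge /ord_graph /= !eqxx.
by split; rewrite ?orbT ?guz ?guw //; apply/andP; rewrite gvz gvw.
Qed.

Lemma add_edge_triangle_K4minus (u v : 'I_N) y t :
  y < N -> t < N -> uniq [:: u : nat; y; v : nat; t] ->
  g u y -> g y v -> g u t -> g y t -> has_K4minus (add_edge ord_graph u v).
Proof.
move=> yN tN uq guy gyv gut gyt.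
exists u, (Ordinal yN), v, (Ordinal tN); rewrite /add_edge /ord_graph /= !eqxx.
by split; rewrite ?orbT ?guy ?gut //; apply/andP; rewrite gyv gyt.
Qed.

End OrdinalGraph.

Lemma sum_interval n l h : \sum_(i < n) (l <= i < h) = minn h n - minn l n.
Proof.
elim: n => [|n IHn]; first by rewrite big_ord0; lia.
by rewrite big_ord_recr /= IHn; lia.
Qed.

Lemma sum_rectangle n l1 h1 l2 h2 :
  \sum_(x < n) \sum_(y < n) ((l1 <= x < h1) && (l2 <= y < h2)) =
  (minn h1 n - minn l1 n) * (minn h2 n - minn l2 n).
Proof.
rewrite -!sum_interval big_distrl; apply: eq_bigr => x _.
by rewrite big_distrr; apply: eq_bigr => y _; rewrite /= mulnb.
Qed.

Lemma sum_ord_eq n c : \sum_(i < n) ((i : nat) == c) = (c < n).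
Proof.
elim: n => [|n IHn]; first by rewrite big_ord0.
by rewrite big_ord_recr /= IHn; lia.
Qed.

Lemma sum_translation n l h d : h + d <= n ->
  \sum_(x < n) \sum_(y < n) ((l <= x < h) && ((y : nat) == x + d)) = h - l.
Proof.
move=> hdn; rewrite -(_ : minn h n - minn l n = h - l); last by lia.
rewrite -sum_interval; apply: eq_bigr => x _.
have [x_lh|] := boolP (l <= x < h); last by rewrite big1.
by rewrite sum_ord_eq; lia.
Qed.

Section Construction.
Variables a c1 c2 k : nat.
Hypotheses (a_ge3 : 3 <= a) (c1_ge2 : 2 <= c1) (k_gt0 : 0 < k) (k_le_c1 : k <= c1).
Local Notation N := (a + c1 + c2 + k).

(* The blocks are A = [0, a), C1 = [a, a + c1), C2, Q = [a + c1 + c2, N), with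
   x0 = 0; each edge is listed once, from its smaller end, and the last clause
   is the matching p |-> p + (c1 + c2) of P = [a, a + k) onto Q. *)
Definition sat_arc (u v : nat) : bool :=
  [|| (u < a) && (a <= v < a + c1),
      (0 < u < a) && (a + c1 <= v < a + c1 + c2),
      (a + c1 <= u < a + c1 + c2) && (a + c1 + c2 <= v < N),
      (u == 0) && (a + c1 + c2 <= v < N)
    | (a <= u < a + k) && (v == u + (c1 + c2))].

Definition sat_adj (u v : nat) : bool := sat_arc u v || sat_arc v u.

Definition sat_graph : rel 'I_N := ord_graph sat_adj.

Lemma sat_arc_lt u v : sat_arc u v -> u < v.
Proof. rewrite /sat_arc; lia. Qed.

Lemma sat_adjC u v : sat_adj u v = sat_adj v u.
Proof. by rewrite /sat_adj orbC. Qed.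

Lemma sat_adj_irr u : sat_adj u u = false.
Proof. by rewrite /sat_adj orbb; apply/negP => /sat_arc_lt; rewrite ltnn. Qed.

Lemma sat_adj_arc u v : (u < v) && sat_adj u v = sat_arc u v.
Proof.
rewrite /sat_adj; case: (ltngtP u v) => [lt_uv | lt_vu | ->] /=.
- by case: (boolP (sat_arc v u)) => [/sat_arc_lt | _]; [lia | rewrite orbF].
- by apply/esym/negP => /sat_arc_lt; lia.
- by apply/esym/negP => /sat_arc_lt; rewrite ltnn.
Qed.

Lemma sat_adjE u v : u < v -> sat_adj u v = sat_arc u v.
Proof. by move=> lt_uv; rewrite -sat_adj_arc lt_uv. Qed.

Lemma sat_adj_side u v : 0 < u -> 0 < v -> sat_adj u v ->
  (a <= u < a + c1 + c2) != (a <= v < a + c1 + c2).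
Proof. rewrite /sat_adj /sat_arc; lia. Qed.

Lemma sat_triangle0 u v w : sat_adj u v -> sat_adj v w -> sat_adj u w ->
  [|| u == 0, v == 0 | w == 0].
Proof.
move=> huv hvw huw; apply/negPn/negP; rewrite !negb_or -!lt0n => /and3P[u0 v0 w0].
move: (sat_adj_side u0 v0 huv) (sat_adj_side v0 w0 hvw) (sat_adj_side u0 w0 huw).
by case: (_ <= u < _); case: (_ <= v < _); case: (_ <= w < _).
Qed.

Lemma sat_adj0 v :
  sat_adj 0 v = (a <= v < a + c1) || (a + c1 + c2 <= v < N).
Proof. rewrite /sat_adj /sat_arc; lia. Qed.

Lemma sat_adj_nbr0 v w : sat_adj 0 v -> sat_adj 0 w -> sat_adj v w ->
  (a <= v < a + k) && (w == v + (c1 + c2)) || (a <= w < a + k) && (v == w + (c1 + c2)).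
Proof. rewrite !sat_adj0 /sat_adj /sat_arc; lia. Qed.

Lemma sat_common_nbr_uniq x y z w :
  sat_adj x y -> sat_adj x z -> sat_adj y z -> sat_adj x w -> sat_adj y w -> z = w.
Proof.
move=> hxy hxz hyz hxw hyw.
have nbr0_uniq v : sat_adj 0 v -> sat_adj 0 z -> sat_adj 0 w ->
    sat_adj v z -> sat_adj v w -> z = w.
  move=> h0v h0z h0w hvz hvw.
  by move: (sat_adj_nbr0 h0v h0z hvz) (sat_adj_nbr0 h0v h0w hvw); lia.
case/or3P: (sat_triangle0 hxy hyz hxz) => [/eqP x0 | /eqP y0 | /eqP z0].
- by rewrite x0 in hxy hxz hxw; exact: nbr0_uniq hxy hxz hxw hyz hyw.
- by rewrite y0 sat_adjC in hxy; rewrite y0 in hyz hyw; exact: nbr0_uniq hxy hyz hyw hxz hxw.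
- rewrite z0 in hxz hyz; case/or3P: (sat_triangle0 hxy hyw hxw) => /eqP w0.
  + by rewrite w0 sat_adj_irr in hxz.
  + by rewrite w0 sat_adj_irr in hyz.
  + by rewrite w0.
Qed.

Ltac sat_solve := rewrite /= ?inE; first
  [ rewrite sat_adjE; last lia; rewrite /sat_arc; lia
  | rewrite sat_adjC sat_adjE; last lia; rewrite /sat_arc; lia
  | lia ].

Lemma sat_graph_saturating (u v : 'I_N) : u < v -> ~~ sat_adj u v ->
  has_K4minus (add_edge sat_graph u v).
Proof.
move=> lt_uv; rewrite sat_adjE // => non_uv; have vN := ltn_ord v.
have [v_A | v_nA] := ltnP v a.
  by apply: (add_edge_common_nbrs_K4minus (z := a) (w := a.+1)); sat_solve.
have [u_A | u_nA] := ltnP u a.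
  have [v_C | v_Q] := ltnP v (a + c1 + c2).
    have u0 : u = 0 :> nat by move: non_uv; rewrite /sat_arc; lia.
    have v_C2 : a + c1 <= v by move: non_uv; rewrite /sat_arc; lia.
    by apply: (add_edge_triangle_K4minus (y := a + c1 + c2) (t := a)); sat_solve.
  have u_gt0 : 0 < u by move: non_uv; rewrite /sat_arc; lia.
  apply: (eq_has_K4minus (add_edgeC _ _ _)).
  by apply: (add_edge_triangle_K4minus (y := v - (c1 + c2)) (t := 0)); sat_solve.
have [v_C | v_Q] := ltnP v (a + c1 + c2).
  by apply: (add_edge_common_nbrs_K4minus (z := 1) (w := 2)); sat_solve.
have [u_C1 | u_nC1] := ltnP u (a + c1).
  have u_unmatched : u != v - (c1 + c2) :> nat by move: non_uv; rewrite /sat_arc; lia.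
  apply: (eq_has_K4minus (add_edgeC _ _ _)).
  by apply: (add_edge_triangle_K4minus (y := 0) (t := v - (c1 + c2))); sat_solve.
have u_Q : a + c1 + c2 <= u by move: non_uv; rewrite /sat_arc; lia.
by apply: (add_edge_triangle_K4minus (y := 0) (t := u - (c1 + c2))); sat_solve.
Qed.

Lemma sat_graph_simple : simple_graph sat_graph.
Proof. by split=> [x | x y]; rewrite /sat_graph /ord_graph ?sat_adj_irr // sat_adjC. Qed.

Lemma sat_graph_not_bipartite : ~ bipartite sat_graph.
Proof.
have x0 : 0 < N by lia.
have p : a < N by lia.
have q : a + c1 + c2 < N by lia.
by apply: (triangle_not_bipartite (x := Ordinal x0) (y := Ordinal p) (z := Ordinal q));
  rewrite /sat_graph /ord_graph; sat_solve.
Qed.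

Lemma sat_graph_K4minus_saturated : K4minus_saturated sat_graph.
Proof.
split.
  apply: unique_common_nbr_K4minus_free => x y z w *.
  by apply: val_inj; apply: (sat_common_nbr_uniq (x := x) (y := y)).
move=> u v neq_uv non_uv; have [lt_uv | lt_vu | eq_uv] := ltngtP u v.
- exact: sat_graph_saturating.
- by apply: (eq_has_K4minus (add_edgeC _ _ _)); apply: sat_graph_saturating; rewrite // sat_adjC.
- by rewrite (val_inj eq_uv) eqxx in neq_uv.
Qed.

Lemma sat_arc_sum u v : sat_arc u v =
  (0 <= u < a) && (a <= v < a + c1) + (1 <= u < a) && (a + c1 <= v < a + c1 + c2) +
  (a + c1 <= u < a + c1 + c2) && (a + c1 + c2 <= v < N) +
  (0 <= u < 1) && (a + c1 + c2 <= v < N) + (a <= u < a + k) && (v == u + (c1 + c2)) :> nat.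
Proof.
have disj_nat (b1 b2 : bool) : ~~ (b1 && b2) -> (b1 || b2) = b1 + b2 :> nat.
  by case: b1; case: b2.
rewrite /sat_arc; have -> : (u == 0) = (0 <= u < 1) by case: u.
by rewrite !disj_nat ?addnA //; lia.
Qed.

Lemma num_edges_sat_graph :
  num_edges sat_graph = a * c1 + (a - 1) * c2 + k * c2 + 2 * k.
Proof.
rewrite num_edges_ord_graph.
under eq_bigr => u _ do under eq_bigr => v _ do rewrite sat_adj_arc sat_arc_sum.
under eq_bigr => u _ do rewrite !big_split.
rewrite !big_split !sum_rectangle sum_translation; last lia.
by rewrite /= !(minn_idPl (_ : _ <= N)) ?subn0 ?addKn ?mul1n //; lia.
Qed.

End Construction.

Lemma sat_graph_exists n m a c1 c2 k : 3 <= a -> 2 <= c1 -> 0 < k <= c1 ->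
  n = a + c1 + c2 + k -> m = a * c1 + (a - 1) * c2 + k * c2 + 2 * k ->
  exists e : rel 'I_n,
    [/\ simple_graph e, ~ bipartite e, K4minus_saturated e & num_edges e = m].
Proof.
move=> a_ge3 c1_ge2 /andP[k_gt0 k_le_c1] -> ->; exists (@sat_graph a c1 c2 k).
split; [exact: sat_graph_simple | exact: sat_graph_not_bipartite |
        exact: sat_graph_K4minus_saturated | exact: num_edges_sat_graph].
Qed.

Lemma sat_graph_exists_interval n m a : 3 <= a ->
  a * (n - a - 2) + 4 <= m <= a * (n - a - 2) + n - a ->
  exists e : rel 'I_n,
    [/\ simple_graph e, ~ bipartite e, K4minus_saturated e & num_edges e = m].
Proof.
move=> a_ge3 /andP[lo_m m_hi]; pose c2 := m - (a * (n - a - 2) + 4).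
by apply: (sat_graph_exists (a := a) (c1 := n - a - 2 - c2) (c2 := c2) (k := 2)); rewrite /c2; nia.
Qed.

Lemma interval_cover (lo hi : nat -> nat) a0 a1 m :
  (forall a, a0 <= a < a1 -> lo a.+1 <= (hi a).+1) ->
  a0 <= a1 -> lo a0 <= m <= hi a1 -> exists2 a, a0 <= a <= a1 & lo a <= m <= hi a.
Proof.
move=> step le_a01 /andP[lo_m m_hi].
elim: a1 le_a01 m_hi step => [|a1 IHa1] le_a01 m_hi step.
  have a0_0 : a0 = 0 by lia.
  by subst a0; exists 0; rewrite ?lo_m.
have [eq_a01 | ne_a01] := eqVneq a0 a1.+1; first by exists a0; rewrite ?leqnn ?lo_m // eq_a01.
have [m_le | m_gt] := leqP m (hi a1).
  have le_a01' : a0 <= a1 by lia.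
  have [a ? ?] := IHa1 le_a01' m_le (fun a a_range => step a ltac:(lia)).
  by exists a => //; lia.
exists a1.+1; first by lia.
by rewrite m_hi andbT (leq_trans (step a1 _)) //; lia.
Qed.

Lemma half_add_half_pred n : n./2 + (n.-1)./2 = n.-1.
Proof. by case: n => //= n; rewrite uphalf_half -addnA addnn odd_double_half. Qed.

Theorem theorem1p2 (n m : nat) :
  10 <= n ->
  3 * n - 11 <= m <= (n.-1)./2 * n./2 + 2 ->
  exists e : rel 'I_n,
    [/\ simple_graph e, ~ bipartite e, K4minus_saturated e & num_edges e = m].
Proof.
move=> n_ge10 /andP[m_lo m_hi].
move: (n.-1)./2 (odd_double_half n.-1) (half_add_half_pred n) m_hi => h parity halves.
rewrite (_ : n./2 = n - 1 - h); last by lia.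
move=> m_hi; pose lo a := a * (n - a - 2) + 4; pose hi a := a * (n - a - 2) + n - a.
have [m_le | m_gt] := leqP m (hi h).
  have step a : 3 <= a < h -> lo a.+1 <= (hi a).+1.
    by move=> a_range; rewrite /lo /hi; clear -a_range parity; nia.
  have h_ge3 : 3 <= h by lia.
  have lo3_m_hi : lo 3 <= m <= hi h by rewrite /lo m_le andbT; lia.
  have [a /andP[a_ge3 _] m_range] := interval_cover step h_ge3 lo3_m_hi.
  exact: sat_graph_exists_interval a_ge3 m_range.
have m_max : m = h * (n - 1 - h) + 2.
  by rewrite /hi in m_gt; clear -parity n_ge10 m_gt m_hi; nia.
by apply: (sat_graph_exists (a := h) (c1 := n - 1 - h) (c2 := 0) (k := 1)); lia.
Qed.
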